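(* Let $E$ be a directed graph such that each cycle is either without exits or extreme, and such that each infinite emitter lies on a cycle. If $H\subseteq E^0$ is hereditary and saturated, then no vertex of $R(H)-H$ lies on a cycle and each vertex of $R(H)-H$ is regular. Consequently, if $(H,S)$ is an admissible pair of $E$, then $B_H=S=\emptyset$.
   Context: A path is a vertex or finite sequence of edges $e_1\dots e_n$ with $\mathbf{r}(e_i)=\mathbf{s}(e_{i+1})$; $p^0$ is its vertex set. A cycle is a closed path of positive length whose edges have distinct sources; an exit of a cycle $c$ is an edge with source in $c^0$ not on $c$. A cycle $c$ is extreme if it has exits and for every path $p$ with $\mathbf{s}(p)\in c^0$ there is a path $q$ with $\mathbf{s}(q)=\mathbf{r}(p)$ and $\mathbf{r}(q)\in c^0$. An infinite emitter emits infinitely many edges; a sink emits none; a vertex is regular if it is neither. $u\ge v$ means there is a path (possibly of length 0) from $u$ to $v$; $R(V)=\{u\mid u\ge v$ for some $v\in V\}$. $H$ hereditary: closed under following paths; saturated: every regular $v$ with $\mathbf{r}(\mathbf{s}^{-1}(v))\subseteq H$ is in $H$. $B_H=\{v\in E^0-H\mid v$ is an infinite emitter and $\mathbf{s}^{-1}(v)\cap\mathbf{r}^{-1}(E^0-H)$ is nonempty and finite$\}$. An admissible pair is $(H,S)$ with $H$ hereditary saturated and $S\subseteq B_H$. *)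

(* A directed graph E = (E^0, E^1, s, r) is given by a vertex
   type V, an edge type Ed, and source/range maps s r : Ed -> V.
   Subsets of E^0 are predicates V -> Prop. *)
From Stdlib Require Import List.
Import ListNotations.
Set Implicit Arguments.

Section Graph.
Variables (V Ed : Type) (s r : Ed -> V).

Fixpoint is_path (p : list Ed) : Prop :=
  match p with
  | [] => True
  | e :: p' =>
      match p' with
      | [] => True
      | f :: _ => r e = s f /\ is_path p'
      end
  end.

Definition geq (u v : V) : Prop :=
  u = v \/
  exists (e : Ed) (p : list Ed),
    is_path (e :: p) /\ s e = u /\ r (last (e :: p) e) = v.

Definition is_cycle (c : list Ed) : Prop :=
  exists (e : Ed) (p : list Ed),
    c = e :: p /\ is_path c /\ r (last c e) = s e /\ NoDup (map s c).

Definition cycle_verts (c : list Ed) (v : V) : Prop := In v (map s c).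

Definition is_exit (c : list Ed) (e : Ed) : Prop :=
  cycle_verts c (s e) /\ ~ In e c.

Definition has_exit (c : list Ed) : Prop := exists e, is_exit c e.

Definition extreme (c : list Ed) : Prop :=
  has_exit c /\
  forall u v, cycle_verts c u -> geq u v ->
    exists w, cycle_verts c w /\ geq v w.

Definition finite_edges (P : Ed -> Prop) : Prop :=
  exists l : list Ed, forall e, P e -> In e l.

Definition infinite_emitter (v : V) : Prop :=
  ~ finite_edges (fun e => s e = v).

Definition sink (v : V) : Prop := forall e, s e <> v.

Definition regular (v : V) : Prop := ~ sink v /\ ~ infinite_emitter v.

Definition lies_on_cycle (v : V) : Prop :=
  exists c, is_cycle c /\ cycle_verts c v.

Definition RH (H : V -> Prop) (u : V) : Prop := exists v, H v /\ geq u v.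

Definition hereditary (H : V -> Prop) : Prop :=
  forall u v, H u -> geq u v -> H v.

Definition saturated (H : V -> Prop) : Prop :=
  forall v, regular v -> (forall e, s e = v -> H (r e)) -> H v.

Definition B_H (H : V -> Prop) (v : V) : Prop :=
  ~ H v /\ infinite_emitter v /\
  (exists e, s e = v /\ ~ H (r e)) /\
  finite_edges (fun e => s e = v /\ ~ H (r e)).

Definition admissible_pair (H S : V -> Prop) : Prop :=
  hereditary H /\ saturated H /\ (forall v, S v -> B_H H v).

End Graph.

(* Every vertex v on a cycle is recurrent: whatever v reaches reaches v back.
   For a cycle without exits this holds because paths starting on it stay on
   it; for an extreme cycle, because whatever v reaches gets back to the
   cycle, which is strongly connected. Hence a cycle vertex that
   reaches the hereditary set H already lies in H, so every v in R(H) - H is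
   off all cycles; it is not a sink since it reaches H by a path of positive
   length, and not an infinite emitter since those lie on cycles. Only finitely
   many of the infinitely many edges of a vertex of B_H end outside H, so it
   lies in R(H) - H and is regular, a contradiction; thus B_H = S = ∅. *)
From Stdlib Require Import List Classical.
Import ListNotations.
Set Implicit Arguments.
Unset Strict Implicit.

Section Reachability.
Variables (V Ed : Type) (s r : Ed -> V).

Inductive reach : V -> V -> Prop :=
| reach_refl u : reach u u
| reach_step e w : reach (r e) w -> reach (s e) w.

Lemma reach_trans u v w : reach u v -> reach v w -> reach u w.
Proof. induction 1; auto using reach_step. Qed.

Lemma last_cons_default (x : Ed) p d d' : last (x :: p) d = last (x :: p) d'.
Proof.
  revert x; induction p as [|y p IH]; intros x; simpl; auto.
  specialize (IH y); simpl in IH; destruct p; auto.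
Qed.

Lemma path_source_reach_last e p d x :
  is_path s r (e :: p) -> In x (map s (e :: p)) -> reach x (r (last (e :: p) d)).
Proof.
  revert e x; induction p as [|f p IH]; intros e x Hp Hx.
  - destruct Hx as [<-|[]]; apply reach_step, reach_refl.
  - destruct Hp as [Hef Hp].
    change (last (e :: f :: p) d) with (last (f :: p) d).
    destruct Hx as [<-|Hx].
    + apply reach_step; rewrite Hef; apply IH; simpl; auto.
    + apply IH; auto.
Qed.

Lemma path_head_reach_source e p x :
  is_path s r (e :: p) -> In x (map s (e :: p)) -> reach (s e) x.
Proof.
  revert e; induction p as [|f p IH]; intros e Hp Hx.
  - destruct Hx as [<-|[]]; apply reach_refl.
  - destruct Hp as [Hef Hp]; destruct Hx as [<-|Hx]; [apply reach_refl|].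
    apply reach_step; rewrite Hef; apply IH; auto.
Qed.

Lemma path_range_in_sources_or_last e p f :
  is_path s r (e :: p) -> In f (e :: p) ->
  In (r f) (map s p) \/ r f = r (last (e :: p) e).
Proof.
  revert e; induction p as [|g p IH]; intros e Hp Hf.
  - destruct Hf as [<-|[]]; right; reflexivity.
  - destruct Hp as [Heg Hp]; destruct Hf as [<-|Hf].
    + left; rewrite Heg; left; reflexivity.
    + destruct (IH g Hp Hf) as [Hin|Hlast]; [left; right; exact Hin|right].
      change (last (e :: g :: p) e) with (last (g :: p) e).
      rewrite Hlast; apply f_equal, last_cons_default.
Qed.

Lemma geq_reach u v : geq s r u v <-> reach u v.
Proof.
  split.
  - intros [<-|[e [p [Hp [<- <-]]]]]; [apply reach_refl|].
    apply path_source_reach_last; simpl; auto.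
  - induction 1 as [u|e w _ [<-|[f [p [Hp [Hs Hl]]]]]]; [left; reflexivity|right..].
    + exists e, []; simpl; auto.
    + exists e, (f :: p); repeat split; simpl; auto.
      rewrite <- Hl; apply f_equal, last_cons_default.
Qed.

Lemma hereditary_reach H u v : hereditary s r H -> H u -> reach u v -> H v.
Proof. intros Hher Hu Huv; apply (Hher u); auto; apply geq_reach; exact Huv. Qed.

Lemma cycle_verts_reach c x y :
  is_cycle s r c -> cycle_verts s c x -> cycle_verts s c y -> reach x y.
Proof.
  intros [e [p [-> [Hp [Hl _]]]]] Hx Hy.
  apply reach_trans with (s e).
  - rewrite <- Hl; apply (path_source_reach_last e Hp Hx).
  - apply (path_head_reach_source Hp Hy).
Qed.

Lemma cycle_without_exit_closed c u w :
  is_cycle s r c -> ~ has_exit s c -> reach u w ->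
  cycle_verts s c u -> cycle_verts s c w.
Proof.
  intros Hc Hne Hr; induction Hr as [u|f w _ IH]; intros Hu; auto.
  apply IH.
  assert (Hf : In f c).
  { apply NNPP; intros Hf; apply Hne; exists f; split; auto. }
  destruct Hc as [e [p [-> [Hp [Hl _]]]]].
  destruct (path_range_in_sources_or_last Hp Hf) as [Hin|Hlast].
  - right; exact Hin.
  - rewrite Hlast, Hl; left; reflexivity.
Qed.

Lemma cycle_vertex_recurrent v w :
  (forall c, is_cycle s r c -> ~ has_exit s c \/ extreme s r c) ->
  lies_on_cycle s r v -> reach v w -> reach w v.
Proof.
  intros Hcyc [c [Hc Hv]] Hvw.
  destruct (Hcyc c Hc) as [Hne|[_ Hext]].
  - apply (cycle_verts_reach Hc); auto.
    apply (cycle_without_exit_closed Hc Hne Hvw Hv).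
  - destruct (Hext v w Hv (proj2 (geq_reach v w) Hvw)) as [x [Hx Hwx]].
    apply reach_trans with x; [apply geq_reach; exact Hwx|].
    apply (cycle_verts_reach Hc); auto.
Qed.

Lemma infinite_emitter_edge_outside (P : Ed -> Prop) v :
  infinite_emitter s v -> finite_edges (fun e => s e = v /\ ~ P e) ->
  exists e, s e = v /\ P e.
Proof.
  intros Hinf [l Hl]; apply NNPP; intros Hno; apply Hinf.
  exists l; intros e He; apply Hl; split; auto.
  intros HPe; apply Hno; exists e; auto.
Qed.

End Reachability.

Section ExitlessOrExtremeCycles.
Variables (V Ed : Type) (s r : Ed -> V).
Hypothesis cycles_exitless_or_extreme :
  forall c, is_cycle s r c -> ~ has_exit s c \/ extreme s r c.
Hypothesis infinite_emitter_on_cycle :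
  forall v, infinite_emitter s v -> lies_on_cycle s r v.
Variable H : V -> Prop.
Hypothesis H_hereditary : hereditary s r H.

Lemma RH_minus_H_off_cycles v : RH s r H v -> ~ H v -> ~ lies_on_cycle s r v.
Proof.
  intros [h [Hh Hvh]] Hv Hcv; apply Hv, (hereditary_reach H_hereditary Hh).
  apply (cycle_vertex_recurrent cycles_exitless_or_extreme Hcv), geq_reach.
  exact Hvh.
Qed.

Lemma RH_minus_H_regular v : RH s r H v -> ~ H v -> regular s v.
Proof.
  intros HRv Hv; split.
  - destruct HRv as [h [Hh [<-|[e [_ [_ [He _]]]]]]]; [contradiction|].
    intros Hsink; exact (Hsink e He).
  - intros Hie; exact (RH_minus_H_off_cycles HRv Hv (infinite_emitter_on_cycle Hie)).
Qed.

Lemma B_H_empty v : ~ B_H s r H v.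
Proof.
  intros [Hv [Hie [_ Hfin]]].
  destruct (infinite_emitter_edge_outside (P := fun e => H (r e)) Hie Hfin)
    as [e [<- He]].
  apply (RH_minus_H_regular (v := s e)); [|exact Hv|exact Hie].
  exists (r e); split; [exact He|right; exists e, []; simpl; auto].
Qed.

End ExitlessOrExtremeCycles.

Theorem lemma3p13 (V Ed : Type) (s r : Ed -> V)
  (Hcyc : forall c, is_cycle s r c -> ~ has_exit s c \/ extreme s r c)
  (Hinf : forall v, infinite_emitter s v -> lies_on_cycle s r v) :
  (forall H : V -> Prop, hereditary s r H -> saturated s r H ->
     forall v, RH s r H v -> ~ H v -> ~ lies_on_cycle s r v /\ regular s v) /\
  (forall H S : V -> Prop, admissible_pair s r H S ->
     (forall v, ~ B_H s r H v) /\ (forall v, ~ S v)).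
Proof.
  split.
  - intros H Hher _ v HRv Hv; split.
    + exact (RH_minus_H_off_cycles Hcyc Hher HRv Hv).
    + exact (RH_minus_H_regular Hcyc Hinf Hher HRv Hv).
  - intros H S [Hher [_ HS]]; split.
    + exact (B_H_empty Hcyc Hinf Hher).
    + intros v Sv; exact (B_H_empty Hcyc Hinf Hher (HS v Sv)).
Qed.
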